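(* Let $(X,G)$ be a minimal topological dynamical system. If $F\in 2^X$ satisfies $V(F)=\pi_{eq}(F)$, then $F$ has the interior saturation property, i.e. $\pi_{eq}^{-1}(\mathrm{int}(\pi_{eq}(F)))\subset F$.
   Context: $G$ is an infinite countable discrete group; a tds $(X,G)$ is a compact metric space with a $G$-action by homeomorphisms; minimal means no proper nonempty closed invariant subset. $\pi_{eq}:X\to X_{eq}$ is the factor map onto the maximal equicontinuous factor, $\nu_{eq}$ the unique invariant probability measure of $(X_{eq},G)$. $2^X$ is the space of nonempty closed subsets with the Hausdorff metric $d_H$. $\mathcal X=\overline{\{\pi_{eq}^{-1}(y):y\in X_{eq}\}}\subset 2^X$; for $E\in\mathcal X$, $\pi_{\mathcal X}(E)$ is the single point $\pi_{eq}(E)$. $\mathcal X_{eq}^{\mathrm{meas}}=\{E\in\mathcal X:\nu_{eq}(\pi_{\mathcal X}(B^{\mathcal X}_\epsilon(E)))>0\ \forall\epsilon>0\}$, $B^{\mathcal X}_\epsilon(E)$ the open $d_H$-ball in $\mathcal X$. For $F\in 2^X$, $V(F)=\{y\in X_{eq}:\exists E\in\mathcal X_{eq}^{\mathrm{meas}}, E\subset F,\ \pi_{\mathcal X}(E)=y\}$. *)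

From HB Require Import structures.
From mathcomp Require Import all_boot all_order all_algebra.
From mathcomp Require Import all_classical all_reals all_analysis.
Set Implicit Arguments. Unset Strict Implicit. Unset Printing Implicit Defensive.
Import Order.TTheory GRing.Theory Num.Theory.
Local Open Scope classical_set_scope.
Local Open Scope ring_scope.

Record cgroup := CGroup {
  gcar :> Type;
  gmul : gcar -> gcar -> gcar;
  gone : gcar;
  ginv : gcar -> gcar;
  gmulA : forall a b c, gmul a (gmul b c) = gmul (gmul a b) c;
  gmul1 : forall a, gmul gone a = a;
  gmulV : forall a, gmul (ginv a) a = gone;
  gcountable : countable [set: gcar];
  ginfinite : infinite_set [set: gcar] }.

Section Defs.
Variable R : realType.
Variable G : cgroup.

Definition is_metric (T : topologicalType) (d : T -> T -> R) :=
  [/\ (forall x y, 0 <= d x y), (forall x y, d x y = 0 <-> x = y),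
      (forall x y, d x y = d y x),
      (forall x y z, d x z <= d x y + d y z) &
      (forall (x : T) (A : set T),
         nbhs x A <-> exists2 e, 0 < e & [set y | d x y < e] `<=` A)].

(* action of G on T by homeomorphisms (continuity of each act g together
   with the action laws makes each act g a homeomorphism) *)
Definition is_action (T : topologicalType) (act : G -> T -> T) :=
  [/\ (forall x, act (gone G) x = x),
      (forall g h x, act (gmul g h) x = act g (act h x)) &
      (forall g, continuous (act g))].

Definition is_tds (T : topologicalType) (d : T -> T -> R) (act : G -> T -> T) :=
  [/\ is_metric d, compact [set: T] & is_action act].

Definition minimal (T : topologicalType) (act : G -> T -> T) :=
  forall A : set T, closed A -> A !=set0 ->
    (forall g, act g @` A `<=` A) -> A = setT.

Definition equicontinuous (T : topologicalType) (d : T -> T -> R)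
  (act : G -> T -> T) :=
  forall e, 0 < e -> exists2 delta, 0 < delta &
    forall x y, d x y < delta -> forall g, d (act g x) (act g y) < e.

Definition factor_map (T S : topologicalType) (actT : G -> T -> T)
  (actS : G -> S -> S) (p : T -> S) :=
  [/\ continuous p, (forall s, exists t, p t = s) &
      (forall g t, p (actT g t) = actS g (p t))].

Definition max_eq_factor (T : topologicalType) (actT : G -> T -> T)
  (Y : topologicalType) (dY : Y -> Y -> R) (actY : G -> Y -> Y) (p : T -> Y) :=
  [/\ is_tds dY actY, equicontinuous dY actY, factor_map actT actY p &
      forall (Z : topologicalType) (dZ : Z -> Z -> R) (actZ : G -> Z -> Z)
             (q : T -> Z),
        is_tds dZ actZ -> equicontinuous dZ actZ -> factor_map actT actZ q ->
        exists f : Y -> Z, factor_map actY actZ f /\ forall t, q t = f (p t)].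

Definition borel_type (Y : ptopologicalType) := g_sigma_algebraType (@open Y).

Definition invariant_prob (Y : ptopologicalType) (actY : G -> Y -> Y)
  (mu : probability (borel_type Y) R) :=
  forall g (A : set (borel_type Y)), measurable A ->
    mu (actY g @^-1` A) = mu A.

Definition dist_set (T : Type) (d : T -> T -> R) (x : T) (B : set T) : R :=
  inf [set d x b | b in B].
Definition hdist (T : Type) (d : T -> T -> R) (A B : set T) : R :=
  Num.max (sup [set dist_set d a B | a in A]) (sup [set dist_set d b A | b in B]).

(* 2^X : nonempty closed subsets *)
Definition hyper (T : topologicalType) : set (set T) :=
  [set A | closed A /\ A !=set0].

Section Fibers.
Variables (X : topologicalType) (d : X -> X -> R) (Y : ptopologicalType)
  (p : X -> Y).

(* calX = closure in (2^X, d_H) of the fibers p^-1(y) *)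
Definition calX : set (set X) :=
  [set E | hyper E /\ forall e, 0 < e ->
      exists y : Y, hdist d E (p @^-1` [set y]) < e].

(* pi_calX(E) = y, i.e. p(E) is the single point y *)
Definition piX (E : set X) (y : Y) := p @` E = [set y].

(* pi_calX(B^calX_eps(E)) *)
Definition piX_ball (E : set X) (e : R) : set Y :=
  [set y | exists2 E', calX E' /\ hdist d E E' < e & piX E' y].

Definition calX_meas (nu : probability (borel_type Y) R) : set (set X) :=
  [set E | calX E /\ forall e, 0 < e ->
      (0 < nu (piX_ball E e : set (borel_type Y)))%E].

Definition Vset (nu : probability (borel_type Y) R) (F : set X) : set Y :=
  [set y | exists2 E, calX_meas nu E & E `<=` F /\ piX E y].
End Fibers.
End Defs.

From HB Require Import structures.
From mathcomp Require Import all_boot all_order all_algebra.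
From mathcomp Require Import all_classical all_reals all_analysis.
Import Order.TTheory GRing.Theory Num.Theory.
Local Open Scope classical_set_scope.
Local Open Scope ring_scope.

(* Let pi(x) be interior to pi(F) and r > 0 small.  By minimality finitely
   many sets g^-1 B(x, r/2) cover X; the corresponding closed sets
   g^-1 pi(closure B(x, r/2)) cover X_eq, so one of them has interior, and
   pi(B(x, r)) contains a nonempty open set W, inside pi(F) = V(F).  Hence
   some E in calX with E <= F is mapped to a point of W.  As a Hausdorff limit
   of fibres, E is r-close to some fibre over W, i.e. to some fibre meeting
   B(x, r), so F has a point within 2r of x; F being closed, x is in F. *)

(* [compact_cover] needs a pointed space: we point a copy of [T] at [x]. *)
Definition pointed_at {T : topologicalType} (x : T) : Type := T.
HB.instance Definition _ (T : topologicalType) (x : T) :=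
  Topological.on (pointed_at x).
HB.instance Definition _ (T : topologicalType) (x : T) :=
  isPointed.Build (pointed_at x) x.

Lemma compactT_cover {T : topologicalType} (x : T) :
  compact [set: T] -> @cover_compact (pointed_at x) [set: pointed_at x].
Proof. by rewrite -compact_cover. Qed.

Definition mball {R : realType} {T : Type} (d : T -> T -> R) (x : T) (e : R) :
  set T := [set y | d x y < e].

Section Metric.
Context {R : realType} {T : topologicalType} {d : T -> T -> R}.
Hypothesis d_metric : is_metric d.

Lemma is_metric_ge0 x y : 0 <= d x y. Proof. by case: d_metric. Qed.
Lemma is_metric_sym x y : d x y = d y x. Proof. by case: d_metric. Qed.
Lemma is_metric_triangle x y z : d x z <= d x y + d y z.
Proof. by case: d_metric. Qed.
Lemma is_metric_eq0 x y : (d x y = 0) <-> x = y. Proof. by case: d_metric. Qed.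

Lemma is_metric_nbhs x A : nbhs x A <-> exists2 e, 0 < e & mball d x e `<=` A.
Proof. by case: d_metric. Qed.

Lemma nbhs_mball x e : 0 < e -> nbhs x (mball d x e).
Proof. by move=> e_gt0; apply/is_metric_nbhs; exists e. Qed.

Lemma open_mball x e : open (mball d x e).
Proof.
rewrite openE => y xy; apply/is_metric_nbhs; exists (e - d x y).
  by rewrite subr_gt0.
move=> z yz; apply: le_lt_trans (is_metric_triangle x y z) _.
by rewrite -ltrBrDl.
Qed.

Lemma is_metric_hausdorff : hausdorff_space T.
Proof.
move=> p q pq_close; apply/(is_metric_eq0 p q)/eqP.
apply: contraT => /eqP neq_pq.
have d_gt0 : 0 < d p q / 2.
  by rewrite divr_gt0// lt_def is_metric_ge0 andbT; apply/eqP.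
have [z [pz qz]] := pq_close _ _ (nbhs_mball _ _ d_gt0) (nbhs_mball _ _ d_gt0).
have := is_metric_triangle p z q; rewrite (is_metric_sym z q).
by move=> /le_lt_trans/(_ (ltrD pz qz)); rewrite -splitr ltxx.
Qed.

Lemma closure_mball x e :
  0 < e -> closure (mball d x e) `<=` mball d x (e + e).
Proof.
move=> e_gt0 z /(_ _ (nbhs_mball z _ e_gt0)) [w [xw zw]].
apply: le_lt_trans (is_metric_triangle x w z) _.
by rewrite (is_metric_sym w z) ltrD.
Qed.

Lemma closed_metric_limit {F : set T} {x : T} : closed F ->
  (forall e, 0 < e -> exists2 z, F z & d x z < e) -> F x.
Proof.
move=> F_closed near_F; apply: F_closed => A /is_metric_nbhs[e e_gt0 eA].
by have [z Fz xz] := near_F e e_gt0; exists z; split => //; apply: eA.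
Qed.

Lemma compact_metric_bounded :
  compact [set: T] -> T -> exists M, forall a b, d a b <= M.
Proof.
move=> T_compact x0.
have [|D _ cov] := compactT_cover x0 T_compact nat setT
  (fun n => mball d x0 n%:R) (fun n _ => open_mball x0 _).
  by move=> z _; exists (Num.truncn (d x0 z)).+1 => //; exact: truncnS_gt.
pose N := \max_(n <- finmap.enum_fset D) n.
have x0_near z : d x0 z <= N%:R.
  have [n nD x0z] := cov z I; apply/ltW/(lt_le_trans x0z).
  by rewrite ler_nat; exact: (@leq_bigmax_seq _ _ xpredT id).
exists (N%:R + N%:R) => a b.
by apply: le_trans (is_metric_triangle a x0 b) _; rewrite is_metric_sym lerD.
Qed.

Lemma hdistC (A B : set T) : hdist d A B = hdist d B A.
Proof. by rewrite /hdist maxC. Qed.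

Lemma hdist_lt_near {M : R} {A B : set T} {a : T} {e : R} :
  (forall a b, d a b <= M) -> A a -> B !=set0 -> hdist d A B < e ->
  exists2 b, B b & d a b < e.
Proof.
move=> d_bounded Aa [b0 Bb0] AB_lt.
have : dist_set d a B < e.
  apply: le_lt_trans AB_lt; rewrite /hdist le_max ub_le_sup//; last by exists a.
  exists M => _ [a' _ <-]; apply: le_trans (d_bounded a' b0).
  by apply: ge_inf; [exists 0 => _ [b _ <-]; exact: is_metric_ge0 | exists b0].
by case/inf_lt => [|_ [b Bb <-]]; [exists (d a b0), b0 | exists b].
Qed.

End Metric.

Lemma finite_closed_cover_interior (Y : topologicalType) (I : eqType)
    (C : I -> set Y) (s : seq I) (O : set Y) :
  open O -> O !=set0 -> (forall i, i \in s -> closed (C i)) ->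
  O `<=` [set y | exists2 i, i \in s & C i y] ->
  exists2 i, i \in s & exists2 V, open V /\ V !=set0 & V `<=` C i.
Proof.
elim: s O => [|a s IH] O O_open [y Oy] C_closed O_cover.
  by have [i] := O_cover y Oy; rewrite in_nil.
have [[z [Oz Caz]]|O_sub_Ca] := pselect ((O `&` ~` C a) !=set0); last first.
  exists a; first exact: mem_head.
  exists O => //; first by split; last exists y.
  by move=> w Ow; apply: contrapT => Caw; apply: O_sub_Ca; exists w.
have [||||i si Ci_int] := IH (O `&` ~` C a).
- by apply: openI; rewrite // openC; apply: C_closed; rewrite mem_head.
- by exists z.
- by move=> i si; apply: C_closed; rewrite in_cons si orbT.
- move=> w [Ow Caw]; have [i] := O_cover w Ow.
  by rewrite in_cons => /orP[/eqP -> //|si Ciw]; exists i.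
- by exists i; rewrite // in_cons si orbT.
Qed.

Lemma gmulrV (G : cgroup) (g : G) : gmul g (ginv g) = gone G.
Proof.
rewrite -[gmul g _]gmul1 -(gmulV (ginv g)) -gmulA (gmulA (ginv g) g).
by rewrite gmulV gmul1.
Qed.

Section MinimalSystem.
Context {G : cgroup} {X : topologicalType} {act : G -> X -> X}.
Hypotheses (act_action : is_action act) (act_minimal : minimal act).

Lemma minimal_orbit_meets_open (B : set X) : open B -> B !=set0 ->
  forall w, exists g, B (act g w).
Proof.
have [act1 actM act_cont] := act_action.
move=> B_open [b Bb] w; apply: contrapT => not_hit.
pose O := \bigcup_g act g @^-1` B.
have O_open : open O.
  by apply: bigcup_open => g _; apply: open_comp => // x _; exact: act_cont.
suff : (~` O) b by apply; exists (gone G); rewrite //= act1.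
rewrite (@act_minimal (~` O)) //; first by rewrite closedC.
  by exists w => -[g _ Bgw]; apply: not_hit; exists g.
move=> h _ [x Ox <-] [g _ Bghx]; apply: Ox.
by exists (gmul g h); rewrite //= actM.
Qed.

End MinimalSystem.

Section FactorOfMinimal.
Context {G : cgroup} {X Y : topologicalType}.
Context {actX : G -> X -> X} {actY : G -> Y -> Y} {p : X -> Y}.
Hypotheses (X_compact : compact [set: X]) (actX_action : is_action actX)
  (actX_minimal : minimal actX) (Y_hausdorff : hausdorff_space Y)
  (actY_action : is_action actY) (p_factor : factor_map actX actY p).

Lemma factor_image_closure_interior (B : set X) : open B -> B !=set0 ->
  exists2 V, open V /\ V !=set0 & V `<=` p @` closure B.
Proof.
move=> B_open [b Bb].
have [_ _ actX_cont] := actX_action.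
have [actY1 actYM actY_cont] := actY_action.
have [p_cont p_surj p_equiv] := p_factor.
have [g Bg] := choice (minimal_orbit_meets_open actX_action actX_minimal
  _ B_open (ex_intro _ b Bb)).
have [D _ X_cover] := compactT_cover b X_compact X setT
  (fun w => actX (g w) @^-1` B)
  (fun w _ => open_comp (fun x _ => actX_cont _ x) B_open)
  (fun w _ => ex_intro2 _ _ w I (Bg w)).
have pK_closed : closed (p @` closure B).
  have K_compact : compact (closure B).
    by apply: subclosed_compact X_compact _; [exact: closed_closure|].
  exact: compact_closed Y_hausdorff
    (continuous_compact (continuous_subspaceT p_cont) K_compact).
pose C w := actY (g w) @^-1` (p @` closure B).
have [||w _ [V [V_open [v Vv]] V_sub]] :=
  @finite_closed_cover_interior Y X C (finmap.enum_fset D) setT openT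
    (ex_intro _ (p b) I).
- by move=> w _; apply: preimage_closed pK_closed => y _; exact: actY_cont.
- move=> y _; have [x <-] := p_surj y; have [w Dw Bgwx] := X_cover x I.
  exists w => //; rewrite /C /= -p_equiv.
  by exists (actX (g w) x) => //; exact: subset_closure.
- exists (actY (ginv (g w)) @^-1` V).
    split; first exact: open_comp (fun y _ => actY_cont _ y) V_open.
    by exists (actY (g w) v); rewrite /= -actYM gmulV actY1.
  by move=> y /V_sub; rewrite /C /= -actYM gmulrV actY1.
Qed.

Lemma factor_image_mball_interior {R : realType} {dX : X -> X -> R} :
  is_metric dX -> forall x r, 0 < r ->
  exists2 V, open V /\ V !=set0 & V `<=` p @` mball dX x r.
Proof.
move=> dX_metric x r r_gt0.
have r2_gt0 : 0 < r / 2 by rewrite divr_gt0.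
have [|V V_open V_sub] :=
  factor_image_closure_interior _ (open_mball dX_metric x (r / 2)).
  by exists x; rewrite /mball /= (proj2 (is_metric_eq0 dX_metric x x) erefl).
exists V => // y /V_sub[z /(closure_mball dX_metric x _ r2_gt0) xz <-].
by exists z; rewrite // /mball /= [r in _ < r]splitr.
Qed.

End FactorOfMinimal.

Section HausdorffLimitsOfFibers.
Context {R : realType} {X : topologicalType} {Y : ptopologicalType}.
Context {d : X -> X -> R} {p : X -> Y}.
Hypotheses (d_metric : is_metric d) (X_compact : compact [set: X])
  (p_cont : continuous p) (p_surj : forall y, exists x, p x = y).

Lemma calX_near_fibers {E : set X} {z : X} {W : set Y} {e : R} :
  calX d p E -> E z -> open W -> W (p z) -> 0 < e ->
  exists2 y, W y & forall w, p w = y -> exists2 z', E z' & d w z' < e.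
Proof.
move=> [_ E_approx] Ez W_open Wpz e_gt0.
have [e0 e0_gt0 z_ball] : exists2 e0, 0 < e0 & mball d z e0 `<=` p @^-1` W.
  by apply/(is_metric_nbhs d_metric)/p_cont; exact: open_nbhs_nbhs.
pose e' := Num.min e e0.
have e'_gt0 : 0 < e' by rewrite lt_min e_gt0 e0_gt0.
have [y Ey] := E_approx e' e'_gt0.
have [M d_bounded] := compact_metric_bounded d_metric X_compact z.
exists y.
  have [w <- zw] := hdist_lt_near d_metric d_bounded Ez (p_surj y) Ey.
  by apply: z_ball; apply: lt_le_trans zw _; rewrite ge_min lexx orbT.
move=> w pw; rewrite hdistC in Ey.
have [z' Ez' wz'] := hdist_lt_near d_metric d_bounded pw (ex_intro _ z Ez) Ey.
by exists z' => //; apply: lt_le_trans wz' _; rewrite ge_min lexx.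
Qed.

End HausdorffLimitsOfFibers.

Theorem lemma3p6 (R : realType) (G : cgroup)
  (X : topologicalType) (dX : X -> X -> R) (actX : G -> X -> X)
  (Xeq : ptopologicalType) (dY : Xeq -> Xeq -> R) (actY : G -> Xeq -> Xeq)
  (pi_eq : X -> Xeq) (nu_eq : probability (borel_type Xeq) R) :
  is_tds dX actX -> minimal actX ->
  max_eq_factor actX dY actY pi_eq ->
  invariant_prob actY nu_eq ->
  (forall mu : probability (borel_type Xeq) R, invariant_prob actY mu ->
     forall A : set (borel_type Xeq), measurable A -> mu A = nu_eq A) ->
  forall F : set X, hyper F ->
    Vset dX pi_eq nu_eq F = pi_eq @` F ->
    pi_eq @^-1` (pi_eq @` F)° `<=` F.
Proof.
move=> [dX_metric X_compact actX_action] actX_minimal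
  [[dY_metric _ actY_action] _ pi_factor _] _ _ F [F_closed _] VF x /= x_int.
have [pi_cont pi_surj _] := pi_factor.
have [del del_gt0 x_ball] : exists2 del, 0 < del &
    mball dX x del `<=` pi_eq @^-1` (pi_eq @` F).
  by apply/(is_metric_nbhs dX_metric); exact: pi_cont.
apply: (closed_metric_limit dX_metric F_closed) => e e_gt0.
pose r := Num.min (e / 2) del.
have r_gt0 : 0 < r by rewrite lt_min divr_gt0.
have [W [W_open [y Wy]] W_sub] := factor_image_mball_interior X_compact
  actX_action actX_minimal (is_metric_hausdorff dY_metric) actY_action pi_factor
  dX_metric x _ r_gt0.
have [E [E_calX _] [EF piE]] : Vset dX pi_eq nu_eq F y.
  rewrite VF; have [w xw <-] := W_sub y Wy; apply: x_ball.
  by apply: lt_le_trans xw _; rewrite ge_min lexx orbT.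
have [[_ [z Ez]] _] := E_calX.
have pi_z : pi_eq z = y.
  have : (pi_eq @` E) (pi_eq z) by exists z.
  by rewrite piE.
rewrite -pi_z in Wy.
have [y' Wy' near_E] := calX_near_fibers dX_metric X_compact pi_cont pi_surj
  E_calX Ez W_open Wy r_gt0.
have [w xw pi_w] := W_sub y' Wy'.
have [z' Ez' wz'] := near_E w pi_w.
exists z'; first exact: EF.
apply: le_lt_trans (is_metric_triangle dX_metric x w z') _.
apply: lt_le_trans (ltrD xw wz') _.
by rewrite [e]splitr lerD // ge_min lexx.
Qed.
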